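(* Let $\mathcal{A}$ be a finite-dimensional real associative unital algebra with a norm $\|\cdot\|$ satisfying $\|x\star y\|\le m_{\mathcal{A}}\|x\|\|y\|$ for some constant $m_{\mathcal{A}}>0$. If $f(z)=\sum_n c_n\star z^n$ is an entire function on $\mathcal{A}$, then $\limsup_{n\to\infty}\sqrt[n]{\|c_n\|}=0$, and consequently the series for $f$ is uniformly absolutely convergent on $\{z:\|z\|<L\}$ for every $L>0$.
   Context: $f$ entire means the power series $\sum c_n\star z^n$ ($c_n\in\mathcal{A}$) converges for every $z\in\mathcal{A}$. A series of functions $\sum g_n$ is uniformly absolutely convergent on $E$ if it converges absolutely at each point of $E$ and it (and $\sum\|g_n\|$) converges uniformly on $E$. *)

From HB Require Import structures.
From mathcomp Require Import all_boot all_order all_algebra falgebra.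
From mathcomp Require Import all_classical all_reals all_analysis.
Set Implicit Arguments. Unset Strict Implicit. Unset Printing Implicit Defensive.
Import Order.TTheory GRing.Theory Num.Theory.
Local Open Scope ring_scope.
Local Open Scope classical_set_scope.

Definition is_alg_norm (R : realType) (A : falgType R) (nrm : A -> R) (mA : R) :=
  0 < mA /\
  [/\ forall x, 0 <= nrm x,
      forall x, nrm x = 0 -> x = 0,
      forall x y, nrm (x + y) <= nrm x + nrm y,
      forall (a : R) x, nrm (a *: x) = `|a| * nrm x &
      forall x y, nrm (x * y) <= mA * nrm x * nrm y].

Definition series_converges (R : realType) (V : zmodType) (nv : V -> R)
  (u : nat -> V) :=
  exists s : V, forall e : R, 0 < e -> exists N : nat, forall n : nat,
    (N <= n)%N -> nv (\sum_(k < n) u k - s) < e.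

Definition series_unif_converges (R : realType) (T : Type) (V : zmodType)
  (nv : V -> R) (g : nat -> T -> V) (E : set T) :=
  exists F : T -> V, forall e : R, 0 < e -> exists N : nat, forall n : nat,
    (N <= n)%N -> forall z, E z -> nv (\sum_(k < n) g k z - F z) < e.

Definition unif_abs_converges (R : realType) (T : Type) (V : zmodType)
  (nv : V -> R) (g : nat -> T -> V) (E : set T) :=
  [/\ forall z, E z -> series_converges (fun r : R => `|r|) (fun n => nv (g n z)),
      series_unif_converges nv g E &
      series_unif_converges (fun r : R => `|r|) (fun n z => nv (g n z)) E].

Definition entire_series (R : realType) (A : falgType R) (nrm : A -> R)
  (c : nat -> A) :=
  forall z : A, series_converges nrm (fun n => c n * z ^+ n).

From HB Require Import structures.
From mathcomp Require Import all_boot all_order all_algebra falgebra.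
From mathcomp Require Import all_classical all_reals all_analysis.
From mathcomp Require Import ring lra.
Set Implicit Arguments. Unset Strict Implicit. Unset Printing Implicit Defensive.
Import Order.TTheory GRing.Theory Num.Theory.
Local Open Scope ring_scope.
Local Open Scope classical_set_scope.

(* Evaluating the entire series at z = t 1 shows that |t|^n ||c_n|| -> 0 for
   every real t, hence ||c_n||^(1/n) <= 1/t eventually, for every t > 0.
   Taking t = 2 m_A L, the bound ||z^n|| <= ||1|| (m_A ||z||)^n dominates the
   n-th term on the ball ||z|| < L by C 2^-n, and the Weierstrass M-test with
   this geometric majorant yields uniform convergence of the series and of its
   series of norms, towards the pointwise sums given by entireness and by
   monotone convergence respectively. *)

Lemma geometric_partial_sum_le (R : realFieldType) (q : R) (n m : nat) :
  0 <= q < 1 -> (n <= m)%N -> \sum_(n <= k < m) q ^+ k <= q ^+ n / (1 - q).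
Proof.
move=> /andP[q0 q1] nm; have q1' : 0 < 1 - q by rewrite subr_gt0.
have -> : \sum_(n <= k < m) q ^+ k
          = \sum_(n <= k < m) (- (q ^+ k.+1 / (1 - q)) - - (q ^+ k / (1 - q))).
  by apply: eq_bigr => k _; rewrite exprS; field; rewrite lt0r_neq0.
rewrite telescope_sumr //.
have : 0 <= q ^+ m / (1 - q) by rewrite divr_ge0 ?exprn_ge0 // ltW.
lra.
Qed.

Lemma geometric_eventually_lt (R : realType) (K q e : R) :
  0 <= q < 1 -> 0 < e -> exists N : nat, forall n, (N <= n)%N -> K * q ^+ n < e.
Proof.
move=> /andP[q0 q1] e0.
have K1 : 0 < `|K| + 1 by rewrite ltr_wpDl.
have q1n : `|q| < 1 by rewrite ger0_norm.
have /cvgrPdist_lt /(_ (e / (`|K| + 1))) := cvg_expr q1n.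
rewrite divr_gt0 // => /(_ isT) [N _ HN].
exists N => n /HN /=; rewrite sub0r normrN ger0_norm ?exprn_ge0 // ltr_pdivlMr //.
apply: le_lt_trans; have := exprn_ge0 n q0; have := ler_norm K; nra.
Qed.

Section SeminormedSeries.
Variables (R : realType) (V : zmodType) (nv : V -> R).
Hypotheses (nv0 : nv 0 = 0) (nvN : forall x, nv (- x) = nv x)
  (nvD : forall x y, nv (x + y) <= nv x + nv y).

Definition series_sums_to (u : nat -> V) (s : V) :=
  forall e : R, 0 < e -> exists N : nat, forall n : nat,
    (N <= n)%N -> nv (\sum_(k < n) u k - s) < e.

Lemma nv_ge0 x : 0 <= nv x.
Proof. by have := nvD x (- x); rewrite addrN nv0 nvN; lra. Qed.

Lemma nv_sum_le (I : Type) (r : seq I) (P : pred I) (F : I -> V) :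
  nv (\sum_(i <- r | P i) F i) <= \sum_(i <- r | P i) nv (F i).
Proof.
elim/big_ind2: _ => [|x1 x2 y1 y2 h1 h2|//]; first by rewrite nv0.
exact: le_trans (nvD _ _) (lerD h1 h2).
Qed.

Lemma series_term_eventually_lt (u : nat -> V) (s : V) : series_sums_to u s ->
  forall e : R, 0 < e -> exists N : nat, forall n, (N <= n)%N -> nv (u n) < e.
Proof.
move=> us e e0; have [N HN] := us (e / 2) (divr_gt0 e0 (ltr0n _ 2)).
exists N => n Nn.
have -> : u n = (\sum_(k < n.+1) u k - s) - (\sum_(k < n) u k - s).
  by rewrite big_ord_recr /= opprB addrA addrNK addrC addrA addNr add0r.
apply: le_lt_trans (nvD _ _) _; rewrite nvN (splitr e).
by apply: ltrD; apply: HN => //; exact: leqW.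
Qed.

Lemma series_tail_le_geometric (u : nat -> V) (s : V) (C q : R) :
  0 <= q < 1 -> series_sums_to u s -> (forall k, nv (u k) <= C * q ^+ k) ->
  forall n, nv (\sum_(k < n) u k - s) <= C * q ^+ n / (1 - q).
Proof.
move=> q01 us uC n; apply/ler_addgt0Pr => e e0.
have [N HN] := us e e0; pose M := maxn N n.
have nM : (n <= M)%N by exact: leq_maxr.
have -> : \sum_(k < n) u k - s =
    - (\sum_(n <= k < M) u k) + (\sum_(k < M) u k - s).
  rewrite -!(big_mkord xpredT) (big_cat_nat (leq0n n) nM) /=.
  by rewrite addrA addrCA addNr addr0.
apply: le_trans (nvD _ _) _; rewrite nvN; apply: lerD; last first.
  exact/ltW/HN/leq_maxl.
have C0 : 0 <= C by have := le_trans (nv_ge0 _) (uC 0%N); rewrite mulr1.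
apply: le_trans (nv_sum_le _ _ _) _.
apply: le_trans (ler_sum _ (fun k _ => uC k)) _.
by rewrite -mulr_sumr -mulrA ler_wpM2l // geometric_partial_sum_le.
Qed.

Lemma series_unif_converges_geometric (T : Type) (g : nat -> T -> V) (E : set T)
    (C q : R) :
  0 <= q < 1 -> (forall z, E z -> series_converges nv (g^~ z)) ->
  (forall k z, E z -> nv (g k z) <= C * q ^+ k) -> series_unif_converges nv g E.
Proof.
move=> q01 gE gC.
have /choice [F HF] : forall z, exists s, E z -> series_sums_to (g^~ z) s.
  move=> z; have [/gE [s zs]|nEz] := pselect (E z); first by exists s.
  by exists 0 => /nEz.
exists F => e e0; have [N HN] := geometric_eventually_lt (C / (1 - q)) q01 e0.
exists N => n /HN gn z Ez; apply: le_lt_trans gn.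
rewrite mulrAC; apply: series_tail_le_geometric q01 (HF z Ez) _ n.
by move=> k; exact: gC.
Qed.

End SeminormedSeries.

Lemma series_converges_geometric_majorant (R : realType) (u : nat -> R) (C q : R) :
  0 <= q < 1 -> (forall k, 0 <= u k <= C * q ^+ k) ->
  series_converges (fun r : R => `|r|) u.
Proof.
move=> q01 uC; pose P n := \sum_(k < n) u k.
have P_nd : nondecreasing_seq P.
  by apply/nondecreasing_seqP => n; rewrite /P big_ord_recr lerDl; case/andP: (uC n).
have P_ub : has_ubound (range P).
  exists (C / (1 - q)) => _ [n _ <-].
  have C0 : 0 <= C by case/andP: (uC 0%N); rewrite mulr1; exact: le_trans.
  rewrite /P -(big_mkord xpredT) (le_trans (ler_sum _ (fun k _ => (andP (uC k)).2))) //.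
  rewrite -mulr_sumr ler_wpM2l //.
  by have := geometric_partial_sum_le q01 (leq0n n); rewrite expr0 div1r.
exists (limn P) => e e0.
have /cvgrPdist_lt /(_ e e0) [N _ HN] := nondecreasing_is_cvgn P_nd P_ub.
by exists N => n /HN; rewrite distrC.
Qed.

Lemma unif_abs_converges_geometric (R : realType) (V : zmodType) (nv : V -> R)
    (T : Type) (g : nat -> T -> V) (E : set T) (C q : R) :
  nv 0 = 0 -> (forall x, nv (- x) = nv x) ->
  (forall x y, nv (x + y) <= nv x + nv y) -> 0 <= q < 1 ->
  (forall z, E z -> series_converges nv (g^~ z)) ->
  (forall k z, E z -> nv (g k z) <= C * q ^+ k) -> unif_abs_converges nv g E.
Proof.
move=> nv0 nvN nvD q01 gE gC; have nv_ge0 := nv_ge0 nv0 nvN nvD.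
have absE z : E z -> series_converges (fun r : R => `|r|) (fun k => nv (g k z)).
  move=> Ez; apply: (series_converges_geometric_majorant (C := C) q01) => k.
  by rewrite nv_ge0 gC.
split; [exact: absE | exact: series_unif_converges_geometric gE gC |].
apply: (series_unif_converges_geometric (normr0 R) (@normrN _ R) (@ler_normD _ R)) q01 absE _.
by move=> k z Ez; rewrite ger0_norm //; exact: gC.
Qed.

Lemma powR_root_le (R : realType) (a b : R) (n : nat) :
  0 <= a -> 0 <= b -> (0 < n)%N -> a <= b ^+ n -> a `^ n%:R^-1 <= b.
Proof.
move=> a0 b0 n0 ab.
apply: le_trans (ge0_ler_powR _ _ _ ab) _; rewrite ?invr_ge0 ?nnegrE ?exprn_ge0 //.
by rewrite -powR_mulrn // -powRrM mulfV ?powRr1 // pnatr_eq0 -lt0n.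
Qed.

Section EntireSeries.
Variables (R : realType) (A : falgType R) (nrm : A -> R) (mA : R).
Hypothesis nrm_alg : is_alg_norm nrm mA.

Let mA_gt0 : 0 < mA. Proof. by case: nrm_alg. Qed.
Let nrmD x y : nrm (x + y) <= nrm x + nrm y. Proof. by case: nrm_alg => _ []. Qed.
Let nrmZ (a : R) x : nrm (a *: x) = `|a| * nrm x. Proof. by case: nrm_alg => _ []. Qed.
Let nrmM x y : nrm (x * y) <= mA * nrm x * nrm y. Proof. by case: nrm_alg => _ []. Qed.
Let nrm_ge0 x : 0 <= nrm x. Proof. by case: nrm_alg => _ []. Qed.
Let nrmN x : nrm (- x) = nrm x.
Proof. by rewrite -scaleN1r nrmZ normrN normr1 mul1r. Qed.
Let nrm0 : nrm 0 = 0.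
Proof. by rewrite -(scale0r (0 : A)) nrmZ normr0 mul0r. Qed.

Lemma nrm_exp_le z n : nrm (z ^+ n) <= nrm 1 * (mA * nrm z) ^+ n.
Proof.
elim: n => [|n IH]; first by rewrite !expr0 mulr1.
rewrite exprSr; apply: le_trans (nrmM _ _) _.
rewrite exprSr mulrA -[mA * _ * _]mulrA mulrCA.
by apply: ler_wpM2r => //; rewrite mulr_ge0 // ltW.
Qed.

Variable c : nat -> A.
Hypothesis c_entire : entire_series nrm c.

Lemma scaled_coef_cvg0 (t : R) :
  ((fun n => `|t| ^+ n * nrm (c n)) : R^nat) @ \oo --> 0.
Proof.
have [s cs] := c_entire (t *: 1).
apply/cvgrPdist_lt => e e0.
have [N HN] := series_term_eventually_lt nrmN nrmD (u := fun n => c n * t%:A ^+ n) cs e0.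
exists N => // n /HN; rewrite sub0r normrN ger0_norm ?mulr_ge0 ?exprn_ge0 //.
by rewrite exprZn expr1n -scalerAr mulr1 nrmZ normrX.
Qed.

Lemma root_coef_cvg0 : ((fun n => nrm (c n) `^ n%:R^-1) : R^nat) @ \oo --> 0.
Proof.
apply/cvgrPdist_lt => e e0; pose t := 2 / e.
have t0 : 0 < t by rewrite divr_gt0.
have /cvgrPdist_lt /(_ 1 ltr01) [N _ HN] := scaled_coef_cvg0 t.
exists N.+1 => // n /= Nn; rewrite sub0r normrN ger0_norm ?powR_ge0 //.
have := HN n (ltnW Nn); rewrite /= sub0r normrN ger0_norm ?mulr_ge0 ?exprn_ge0 //.
rewrite ger0_norm ?(ltW t0) // -ltr_pdivlMl ?exprn_gt0 // mulr1 -exprVn => cn.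
apply: le_lt_trans (powR_root_le (nrm_ge0 _) _ _ (ltW cn)) _.
- by rewrite invr_ge0 ltW.
- exact: leq_ltn_trans Nn.
by rewrite /t invf_div ltr_pdivrMr // ltr_pMr // ltr1n.
Qed.

Lemma coef_term_le_geometric (L : R) : exists C, forall n z, nrm z < L ->
  nrm (c n * z ^+ n) <= C * 2^-1 ^+ n.
Proof.
(* with this t, (mA * L)^n = |t|^n 2^-n once L >= 0 *)
pose t := 2 * mA * L.
have [B cB] : exists B, forall n, `|t| ^+ n * nrm (c n) <= B.
  (* R^o carries the normed-module structure [cvg_seq_bounded] expects *)
  have := @cvg_seq_bounded R R^o _ (@cvgP R^o _ 0 (scaled_coef_cvg0 t)).
  by move=> /bounded_fun_has_ubound [B cB]; exists B => n; apply: cB; exists n.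
exists (mA * nrm 1 * B) => n z zL.
have L0 : 0 <= L by exact: le_trans (nrm_ge0 z) (ltW zL).
have zn : nrm (z ^+ n) <= nrm 1 * (`|t| * 2^-1) ^+ n.
  have t0 : 0 <= t by rewrite /t !mulr_ge0 // ltW.
  have -> : `|t| * 2^-1 = mA * L by rewrite ger0_norm // /t; field.
  apply: le_trans (nrm_exp_le z n) _; apply: ler_wpM2l => //.
  have mA0 := ltW mA_gt0.
  by apply: lerXn2r; rewrite ?nnegrE ?mulr_ge0 // ler_wpM2l // ltW.
apply: le_trans (nrmM _ _) _.
apply: le_trans (ler_wpM2l (mulr_ge0 (ltW mA_gt0) (nrm_ge0 _)) zn) _.
have -> : mA * nrm (c n) * (nrm 1 * (`|t| * 2^-1) ^+ n) =
    mA * nrm 1 * (`|t| ^+ n * nrm (c n)) * 2^-1 ^+ n by rewrite exprMn; ring.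
by rewrite ler_wpM2r ?exprn_ge0 ?invr_ge0 // ler_wpM2l // mulr_ge0 // ltW.
Qed.

Lemma limn_esup_root_coef :
  limn_esup (fun n => (nrm (c n) `^ n%:R^-1)%:E) = 0%E.
Proof.
by apply: (cvg_limn_einf_sup _).2; apply: cvg_EFin; [exact: nearW | exact: root_coef_cvg0].
Qed.

Lemma entire_series_unif_abs_converges (L : R) :
  unif_abs_converges nrm (fun n z => c n * z ^+ n) [set z | nrm z < L].
Proof.
have [C cC] := coef_term_le_geometric L.
apply: unif_abs_converges_geometric nrm0 nrmN nrmD _ _ cC => [|z _].
- by rewrite invr_ge0 ler0n invf_lt1 ?ltr1n.
- exact: c_entire.
Qed.

End EntireSeries.

Theorem theorem5p24 (R : realType) (A : falgType R) (nrm : A -> R) (mA : R)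
  (c : nat -> A) :
  is_alg_norm nrm mA -> entire_series nrm c ->
  limn_esup (fun n : nat => ((nrm (c n)) `^ (n%:R^-1))%:E) = 0%E /\
  (forall L : R, 0 < L ->
     unif_abs_converges nrm (fun n (z : A) => c n * z ^+ n) [set z | nrm z < L]).
Proof.
move=> nrm_alg c_entire; split; first exact: (limn_esup_root_coef nrm_alg c_entire).
move=> L _; exact: (entire_series_unif_abs_converges nrm_alg c_entire L).
Qed.
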